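(* Let $\chi:T\to\overline{\mathbf F}_p^\times$ be a smooth character, viewed as a character of $P$, and let $\pi$ be a smooth representation of $G$. If $\mathrm{Hom}_P(\chi,\pi)\neq0$, then $\chi$ extends uniquely to a character of $G$, and (for this extension) $\mathrm{Hom}_P(\chi,\pi)=\mathrm{Hom}_G(\chi,\pi)$.
   Context: $F$ non-Archimedean local field of residual characteristic $p$, $G=\mathrm{GL}_2(F)$, $P$ the upper triangular Borel subgroup, $U$ its unipotent radical, $T$ the diagonal torus; characters of $T$ are viewed as characters of $P$ via $P\to P/U\cong T$. Representations are smooth on $\overline{\mathbf F}_p$-vector spaces. *)

From HB Require Import structures.
From mathcomp Require Import all_boot all_order all_algebra.
Set Implicit Arguments. Unset Strict Implicit. Unset Printing Implicit Defensive.
Import Order.TTheory GRing.Theory Num.Theory.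
Local Open Scope ring_scope.

(* v is only meaningful on nonzero elements; v 0 is irrelevant. *)

(* "x lies in the ideal ϖ^n O" *)
Definition vge (F : fieldType) (v : F -> int) (n : int) (x : F) : Prop :=
  x = 0 \/ n <= v x.

Record is_nonarch_local_field (F : fieldType) (p : nat) (v : F -> int) : Prop := {
  nalf_vmul : forall x y : F, x != 0 -> y != 0 -> v (x * y) = v x + v y;
  nalf_vadd : forall x y : F, x != 0 -> y != 0 -> x + y != 0 ->
                Num.min (v x) (v y) <= v (x + y);
  nalf_unif : exists w : F, w != 0 /\ v w = 1;
  nalf_complete : forall u : nat -> F,
      (forall n : nat, exists N : nat, forall i j : nat, (N <= i)%N -> (N <= j)%N ->
          vge v n%:Z (u i - u j)) ->
      exists l : F, forall n : nat, exists N : nat, forall i : nat, (N <= i)%N ->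
          vge v n%:Z (u i - l);
  nalf_residue_finite : exists s : seq F,
      forall x : F, vge v 0 x -> exists2 y, y \in s & vge v 0 y /\ vge v 1 (x - y);
  nalf_prime : prime p;
  nalf_residue_char : vge v 1 (p%:R : F)
}.

Definition is_Fpbar (C : closedFieldType) (p : nat) : Prop :=
  p \in [pchar C] /\ forall x : C, exists n : nat, (0 < n)%N /\ x ^+ (p ^ n) = x.

Definition inGL (F : fieldType) (g : 'M[F]_2) : Prop := g \in unitmx.

Definition inP (F : fieldType) (g : 'M[F]_2) : Prop :=
  g \in unitmx /\ g ord_max ord0 = 0.

Definition inT (F : fieldType) (g : 'M[F]_2) : Prop :=
  g \in unitmx /\ g ord_max ord0 = 0 /\ g ord0 ord_max = 0.

(* principal congruence subgroup K_n = 1 + ϖ^n M_2(O)  (n >= 1); these form a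
   basis of neighbourhoods of 1 consisting of open subgroups *)
Definition inK (F : fieldType) (v : F -> int) (n : nat) (g : 'M[F]_2) : Prop :=
  g \in unitmx /\ forall i j : 'I_2, vge v n%:Z (g i j - (1%:M : 'M[F]_2) i j).

Definition is_rep (F : fieldType) (C : fieldType) (V : lmodType C)
    (pi : 'M[F]_2 -> V -> V) : Prop :=
  (forall g, inGL g -> forall (a : C) (x y : V), pi g (a *: x + y) = a *: pi g x + pi g y) /\
  (forall x, pi 1%:M x = x) /\
  (forall g h, inGL g -> inGL h -> forall x, pi (g *m h) x = pi g (pi h x)).

Definition is_smooth_rep (F : fieldType) (v : F -> int) (C : fieldType) (V : lmodType C)
    (pi : 'M[F]_2 -> V -> V) : Prop :=
  is_rep pi /\ forall x : V, exists n : nat, forall g, inK v n.+1 g -> pi g x = x.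

(* smooth character of T (a function on matrices, only its values on T matter) *)
Definition is_smooth_char_T (F : fieldType) (v : F -> int) (C : fieldType)
    (chi : 'M[F]_2 -> C) : Prop :=
  (forall t, inT t -> chi t != 0) /\
  (forall t t', inT t -> inT t' -> chi (t *m t') = chi t * chi t') /\
  (exists n : nat, forall t, inT t -> inK v n.+1 t -> chi t = 1).

(* a character of T viewed as a character of P via P -> P/U = T *)
Definition charP (F : fieldType) (C : fieldType) (chi : 'M[F]_2 -> C) (b : 'M[F]_2) : C :=
  chi (diag_mx (\row_i b i i)).

Definition is_smooth_char_G (F : fieldType) (v : F -> int) (C : fieldType)
    (psi : 'M[F]_2 -> C) : Prop :=
  (forall g, inGL g -> psi g != 0) /\
  (forall g h, inGL g -> inGL h -> psi (g *m h) = psi g * psi h) /\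
  (exists n : nat, forall g, inK v n.+1 g -> psi g = 1).

(* C-linear maps f : chi -> pi (the space of chi is C itself) *)
Definition is_Clinear (C : fieldType) (V : lmodType C) (f : C -> V) : Prop :=
  forall a c d : C, f (a * c + d) = a *: f c + f d.

Definition HomP (F : fieldType) (C : fieldType) (V : lmodType C)
    (chi : 'M[F]_2 -> C) (pi : 'M[F]_2 -> V -> V) (f : C -> V) : Prop :=
  is_Clinear f /\ forall b, inP b -> forall c : C, f (chi b * c) = pi b (f c).

Definition HomG (F : fieldType) (C : fieldType) (V : lmodType C)
    (psi : 'M[F]_2 -> C) (pi : 'M[F]_2 -> V -> V) (f : C -> V) : Prop :=
  is_Clinear f /\ forall g, inGL g -> forall c : C, f (psi g * c) = pi g (f c).

Definition extends_char (F : fieldType) (C : fieldType)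
    (psi : 'M[F]_2 -> C) (chiP : 'M[F]_2 -> C) : Prop :=
  forall b, inP b -> psi b = chiP b.

From HB Require Import structures.
From mathcomp Require Import all_boot all_order all_algebra.
From mathcomp Require Import ring zify.
From Stdlib Require Import FunctionalExtensionality.
Set Implicit Arguments. Unset Strict Implicit. Unset Printing Implicit Defensive.
Import Order.TTheory GRing.Theory Num.Theory.
Local Open Scope ring_scope.

(* Let y = f 1 be a nonzero P-eigenvector with character chi.  The upper
   unipotents fix y since chi is trivial on U; conjugating by a diagonal
   matrix shrinks any lower unipotent into the open subgroup fixing y, so the
   lower unipotents fix y as well.  The Weyl element is a product of upper and
   lower unipotents, hence fixes y, and conjugating by it swaps the two
   diagonal entries: chi(diag(s,t)) = chi(diag(t,s)), i.e. chi = chi(diag(det,1)).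
   Since G = U L P, every g acts on y by chi(diag(det g, 1)), which is the
   required extension; it is unique because L is Weyl-conjugate to U, so a
   character of G is determined by its restriction to P. *)

Section Matrix2.
Variable F : fieldType.

Definition mk2 (a b c d : F) : 'M[F]_2 :=
  \matrix_(i, j) if i == ord0 then (if j == ord0 then a else b)
                 else (if j == ord0 then c else d).

Lemma ord2P (i : 'I_2) : i = ord0 \/ i = ord_max.
Proof. by case: i => [[|[|k]] Hk]; [left | right |]; rewrite //; apply: val_inj. Qed.

Lemma mk2_00 a b c d : mk2 a b c d ord0 ord0 = a. Proof. by rewrite mxE. Qed.
Lemma mk2_01 a b c d : mk2 a b c d ord0 ord_max = b. Proof. by rewrite mxE. Qed.
Lemma mk2_10 a b c d : mk2 a b c d ord_max ord0 = c. Proof. by rewrite mxE. Qed.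
Lemma mk2_11 a b c d : mk2 a b c d ord_max ord_max = d. Proof. by rewrite mxE. Qed.

Lemma mk2_eta (A : 'M[F]_2) :
  A = mk2 (A ord0 ord0) (A ord0 ord_max) (A ord_max ord0) (A ord_max ord_max).
Proof. by apply/matrixP => i j; rewrite mxE; case: (ord2P i) => ->; case: (ord2P j) => ->. Qed.

Lemma mx1_mk2 : (1%:M : 'M[F]_2) = mk2 1 0 0 1.
Proof. by apply/matrixP => i j; rewrite !mxE; case: (ord2P i) => ->; case: (ord2P j) => ->. Qed.

Lemma lift0_ord0 : lift ord0 ord0 = ord_max :> 'I_2.
Proof. exact: val_inj. Qed.

Lemma mul_mk2 a b c d a' b' c' d' :
  mk2 a b c d *m mk2 a' b' c' d' =
  mk2 (a * a' + b * c') (a * b' + b * d') (c * a' + d * c') (c * b' + d * d').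
Proof.
apply/matrixP => i j; rewrite !mxE !big_ord_recl big_ord0 !mxE /= ?lift0_ord0.
by case: (ord2P i) => ->; case: (ord2P j) => ->; rewrite /= addr0.
Qed.

Lemma det_mk2 a b c d : \det (mk2 a b c d) = a * d - b * c.
Proof.
rewrite (expand_det_row _ ord0) !big_ord_recl big_ord0 /cofactor !det_mx11 !mxE /=.
by rewrite ?lift0_ord0 /= expr0 expr1; ring.
Qed.

Lemma unitmx_mk2 a b c d : (mk2 a b c d \in unitmx) = (a * d - b * c != 0).
Proof. by rewrite unitmxE det_mk2 unitfE. Qed.

Definition unipU c := mk2 1 c 0 1.
Definition unipL e := mk2 1 0 e 1.
Definition diag2 s t := mk2 s 0 0 t.

Lemma det_unipU c : \det (unipU c) = 1.
Proof. by rewrite det_mk2 mulr1 mulr0 subr0. Qed.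

Lemma det_unipL e : \det (unipL e) = 1.
Proof. by rewrite det_mk2 mulr1 mul0r subr0. Qed.

Lemma inGL_unipU c : inGL (unipU c).
Proof. by rewrite /inGL unitmxE det_unipU unitr1. Qed.

Lemma inGL_unipL e : inGL (unipL e).
Proof. by rewrite /inGL unitmxE det_unipL unitr1. Qed.

Lemma inGL_mul (g h : 'M[F]_2) : inGL g -> inGL h -> inGL (g *m h).
Proof. by rewrite /inGL unitmx_mul => -> ->. Qed.

Lemma inT_diag2 s t : s != 0 -> t != 0 -> inT (diag2 s t).
Proof.
move=> s0 t0; split; last by rewrite mk2_10 mk2_01.
by rewrite unitmx_mk2 mulr0 subr0 mulf_neq0.
Qed.

Lemma inP_unipU c : inP (unipU c).
Proof. by split; [exact: inGL_unipU | rewrite mk2_10]. Qed.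

Lemma inT_inP (b : 'M[F]_2) : inT b -> inP b.
Proof. by case=> ? []. Qed.

Lemma inP_inGL (b : 'M[F]_2) : inP b -> inGL b.
Proof. by case. Qed.

Lemma inT_1 : inT (1%:M : 'M[F]_2).
Proof. by rewrite mx1_mk2; apply: inT_diag2; exact: oner_neq0. Qed.

Lemma diag_mx_diag (b : 'M[F]_2) :
  diag_mx (\row_i b i i) = diag2 (b ord0 ord0) (b ord_max ord_max).
Proof. by apply/matrixP => i j; rewrite !mxE; case: (ord2P i) => ->; case: (ord2P j) => ->. Qed.

Lemma det_inP (b : 'M[F]_2) : inP b -> \det b = b ord0 ord0 * b ord_max ord_max.
Proof. by case=> _ b10; rewrite {1}(mk2_eta b) det_mk2 b10 mulr0 subr0. Qed.

Lemma inP_diag_neq0 (b : 'M[F]_2) : inP b -> b ord0 ord0 != 0 /\ b ord_max ord_max != 0.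
Proof.
move=> bP; have [+ _] := bP.
by rewrite unitmxE unitfE det_inP // mulf_eq0 negb_or => /andP.
Qed.

Lemma GL2_decomp (g : 'M[F]_2) : inGL g ->
  exists c e b, inP b /\ g = unipU c *m (unipL e *m b).
Proof.
rewrite /inGL (mk2_eta g) unitmx_mk2.
set a := g ord0 ord0; set b := g ord0 ord_max; set c := g ord_max ord0;
set d := g ord_max ord_max => det_neq0.
(* a shear making the top-left entry invertible *)
pose c0 : F := if a == 0 then 1 else 0.
have a'_neq0 : a - c0 * c != 0.
  rewrite /c0; have [a0|a0] := eqVneq a 0; last by rewrite mul0r subr0.
  rewrite mul1r a0 sub0r oppr_eq0; apply: contraNneq det_neq0 => c0'.
  by rewrite a0 c0' mulr0 mul0r subrr.
set a' := a - c0 * c in a'_neq0 *.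
exists c0, (c / a'), (mk2 a' (b - c0 * d) 0 (d - c * (b - c0 * d) / a')); split.
  split; last by rewrite mk2_10.
  rewrite unitmx_mk2 mulr0 subr0.
  suff -> : a' * (d - c * (b - c0 * d) / a') = a * d - b * c by [].
  by rewrite /a'; field.
by rewrite /unipU /unipL !mul_mk2; congr mk2; rewrite /a'; field.
Qed.

Definition weyl := mk2 0 1 (-1) 0.
Definition weyl' := mk2 0 (-1) 1 0.

Lemma weyl_unip : weyl = unipU 1 *m (unipL (-1) *m unipU 1).
Proof. by rewrite /unipU /unipL !mul_mk2; congr mk2; ring. Qed.

Lemma weyl'_unip : weyl' = unipU (-1) *m (unipL 1 *m unipU (-1)).
Proof. by rewrite /unipU /unipL !mul_mk2; congr mk2; ring. Qed.

Lemma weylK : weyl *m weyl' = 1%:M.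
Proof. by rewrite mul_mk2 mx1_mk2; congr mk2; ring. Qed.

Lemma inGL_weyl : inGL weyl.
Proof. by rewrite /inGL unitmx_mk2 !(mulr0, mul1r) sub0r opprK oner_neq0. Qed.

Lemma inGL_weyl' : inGL weyl'.
Proof. by rewrite /inGL unitmx_mk2 !(mulr0, mulr1) sub0r opprK oner_neq0. Qed.

Lemma unipL_weyl_conj e : unipL e = weyl *m (unipU (- e) *m weyl').
Proof. by rewrite /unipU /unipL !mul_mk2; congr mk2; ring. Qed.

Lemma diag2_weyl_conj s t : diag2 t s = weyl *m (diag2 s t *m weyl').
Proof. by rewrite /diag2 !mul_mk2; congr mk2; ring. Qed.

Lemma unipL_diag2_conj e s : s != 0 ->
  unipL e = diag2 s 1 *m (unipL (e * s) *m diag2 s^-1 1).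
Proof. by move=> s0; rewrite /diag2 /unipL !mul_mk2; congr mk2; field. Qed.

End Matrix2.

Arguments weyl {F}.
Arguments weyl' {F}.

Section Valuation.
Variables (p : nat) (F : fieldType) (v : F -> int).
Hypothesis hF : is_nonarch_local_field p v.

Lemma vge_le (m n : int) x : m <= n -> vge v n x -> vge v m x.
Proof. by move=> mn [->|nx]; [left | right; apply: le_trans nx]. Qed.

Lemma vge_add n x y : vge v n x -> vge v n y -> vge v n (x + y).
Proof.
move=> [->|nx]; first by rewrite add0r.
move=> [->|ny]; first by rewrite addr0; right.
have [->|x0] := eqVneq x 0; first by rewrite add0r; right.
have [->|y0] := eqVneq y 0; first by rewrite addr0; right.
have [|s0] := eqVneq (x + y) 0; first by left.
by right; apply: le_trans (nalf_vadd hF x0 y0 s0); rewrite le_min nx ny.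
Qed.

Lemma vge_mul n m x y : vge v n x -> vge v m y -> vge v (n + m) (x * y).
Proof.
move=> [->|nx]; first by rewrite mul0r; left.
move=> [->|my]; first by rewrite mulr0; left.
have [->|x0] := eqVneq x 0; first by rewrite mul0r; left.
have [->|y0] := eqVneq y 0; first by rewrite mulr0; left.
by right; rewrite (nalf_vmul hF x0 y0) lerD.
Qed.

Lemma v1 : v 1 = 0.
Proof.
have := nalf_vmul hF (oner_neq0 F) (oner_neq0 F).
by rewrite mulr1 => /esym/eqP; rewrite -subr_eq0 addrK => /eqP.
Qed.

Lemma vN x : x != 0 -> v (- x) = v x.
Proof.
move=> x0; have N10 : (-1 : F) != 0 by rewrite oppr_eq0 oner_neq0.
have vN1 : v (-1) = 0.
  have := nalf_vmul hF N10 N10; rewrite mulrNN mulr1 v1; lia.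
by rewrite -mulN1r (nalf_vmul hF N10 x0) vN1 add0r.
Qed.

Lemma vge_opp n x : vge v n x -> vge v n (- x).
Proof.
move=> [->|nx]; first by rewrite oppr0; left.
have [->|x0] := eqVneq x 0; first by rewrite oppr0; left.
by right; rewrite vN.
Qed.

Lemma vX w k : w != 0 -> v (w ^+ k) = v w *+ k.
Proof.
move=> w0; elim: k => [|k IH]; first by rewrite expr0 mulr0n v1.
by rewrite exprS (nalf_vmul hF w0 (expf_neq0 k w0)) IH mulrS.
Qed.

Lemma exists_scale_vge (n : int) a : exists2 s : F, s != 0 & vge v n (a * s).
Proof.
have [->|a0] := eqVneq a 0.
  by exists 1; [exact: oner_neq0 | left; rewrite mul0r].
have [w [w0 vw]] := nalf_unif hF.
exists (w ^+ `|n - v a|%N); first exact: expf_neq0.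
by right; rewrite (nalf_vmul hF a0 (expf_neq0 _ w0)) vX // vw natz; lia.
Qed.

Lemma inK_mk2 (n : nat) a b c d : mk2 a b c d \in unitmx ->
  vge v n (a - 1) -> vge v n b -> vge v n c -> vge v n (d - 1) ->
  inK v n (mk2 a b c d).
Proof.
move=> gu na nb nc nd; split=> // i j; rewrite mx1_mk2.
by case: (ord2P i) => ->; case: (ord2P j) => ->;
  rewrite ?mk2_00 ?mk2_01 ?mk2_10 ?mk2_11 ?subr0.
Qed.

Lemma det_inK n (g : 'M[F]_2) : inK v n.+1 g -> vge v n.+1 (\det g - 1).
Proof.
case=> _ gK; move: (gK ord0 ord0) (gK ord0 ord_max) (gK ord_max ord0) (gK ord_max ord_max).
rewrite mx1_mk2 !mxE /= (mk2_eta g) det_mk2 ?mk2_00 ?mk2_01 ?mk2_10 ?mk2_11 !subr0.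
set a := g ord0 ord0; set b := g ord0 ord_max; set c := g ord_max ord0;
set d := g ord_max ord_max => na nb nc nd.
have vge_mulK x y : vge v n.+1 x -> vge v n.+1 y -> vge v n.+1 (x * y).
  by move=> nx ny; apply: vge_le (vge_mul nx ny); lia.
have -> : a * d - b * c - 1 = (a - 1) + (d - 1) + (a - 1) * (d - 1) + - (b * c) by ring.
apply: vge_add (vge_opp (vge_mulK _ _ nb nc)).
exact: vge_add (vge_add na nd) (vge_mulK _ _ na nd).
Qed.

End Valuation.

Lemma Clinear_scale (C : fieldType) (V : lmodType C) (f : C -> V) :
  is_Clinear f -> forall c, f c = c *: f 1.
Proof.
move=> fl; have f0 : f 0 = 0.
  by apply: (addrI (f 0)); have := fl 1 0 0; rewrite mulr0 addr0 scale1r addr0 => <-.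
by move=> c; have := fl c 1 0; rewrite mulr1 addr0 f0 addr0.
Qed.

Lemma HomP_eigen (F C : fieldType) (V : lmodType C) (chiP : 'M[F]_2 -> C)
    (pi : 'M[F]_2 -> V -> V) (f : C -> V) :
  HomP chiP pi f -> forall b, inP b -> pi b (f 1) = chiP b *: f 1.
Proof. by case=> fl fP b bP; rewrite -(Clinear_scale fl) -fP ?mulr1. Qed.

Section GLChar.
Variables (F C : fieldType) (psi : 'M[F]_2 -> C).
Hypothesis psi_neq0 : forall g, inGL g -> psi g != 0.
Hypothesis psi_mul : forall g h, inGL g -> inGL h -> psi (g *m h) = psi g * psi h.

Lemma GLchar_1 : psi 1%:M = 1.
Proof.
have GL1 : inGL (1%:M : 'M[F]_2) by rewrite /inGL unitmx1.
by apply: (mulfI (psi_neq0 GL1)); rewrite -psi_mul // mulmx1 mulr1.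
Qed.

Lemma GLchar_unipL e : psi (unipL e) = psi (unipU (- e)).
Proof.
have [W W'] := (inGL_weyl F, inGL_weyl' F).
rewrite unipL_weyl_conj (psi_mul W (inGL_mul (inGL_unipU _) W')) (psi_mul (inGL_unipU _) W').
by rewrite mulrCA -(psi_mul W W') weylK GLchar_1 mulr1.
Qed.

Lemma GLchar_decomp g c e b : inP b -> g = unipU c *m (unipL e *m b) ->
  psi g = psi (unipU c) * psi (unipU (- e)) * psi b.
Proof.
move=> /inP_inGL bGL ->.
rewrite (psi_mul (inGL_unipU _) (inGL_mul (inGL_unipL _) bGL)) (psi_mul (inGL_unipL _) bGL).
by rewrite GLchar_unipL mulrA.
Qed.

End GLChar.

Lemma GLchar_eq_on_P (F C : fieldType) (psi psi' : 'M[F]_2 -> C) :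
  (forall g, inGL g -> psi g != 0) ->
  (forall g h, inGL g -> inGL h -> psi (g *m h) = psi g * psi h) ->
  (forall g, inGL g -> psi' g != 0) ->
  (forall g h, inGL g -> inGL h -> psi' (g *m h) = psi' g * psi' h) ->
  (forall b, inP b -> psi b = psi' b) -> forall g, inGL g -> psi g = psi' g.
Proof.
move=> nz mul nz' mul' eq_P g /GL2_decomp[c [e [b [bP gE]]]].
rewrite (GLchar_decomp nz mul bP gE) (GLchar_decomp nz' mul' bP gE).
by rewrite !eq_P //; exact: inP_unipU.
Qed.

Section Rep.
Variables (F C : fieldType) (V : lmodType C) (pi : 'M[F]_2 -> V -> V).
Hypothesis pi_lin : forall g, inGL g -> forall (a : C) (x y : V),
  pi g (a *: x + y) = a *: pi g x + pi g y.

Lemma rep0 g : inGL g -> pi g 0 = 0.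
Proof.
move=> gGL; have := pi_lin gGL 1 0 0; rewrite !scale1r addr0 => pi0.
by apply: (addrI (pi g 0)); rewrite addr0 -pi0.
Qed.

Lemma repZ g a x : inGL g -> pi g (a *: x) = a *: pi g x.
Proof. by move=> gGL; have := pi_lin gGL a x 0; rewrite !addr0 rep0 // addr0. Qed.

End Rep.

Definition detchar (F C : fieldType) (chi : 'M[F]_2 -> C) (g : 'M[F]_2) : C :=
  chi (diag2 (\det g) 1).

Section TorusChar.
Variables (F C : fieldType) (chi : 'M[F]_2 -> C).
Hypothesis chi_neq0 : forall t, inT t -> chi t != 0.
Hypothesis chi_mul : forall t t', inT t -> inT t' -> chi (t *m t') = chi t * chi t'.

Lemma chi_1 : chi 1%:M = 1.
Proof.
apply: (mulfI (chi_neq0 (inT_1 F))).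
by rewrite -chi_mul ?mulmx1 ?mulr1 //; exact: inT_1.
Qed.

Lemma charP_diag2 s t : charP chi (diag2 s t) = chi (diag2 s t).
Proof. by rewrite /charP diag_mx_diag mk2_00 mk2_11. Qed.

Lemma charP_unipU c : charP chi (unipU c) = 1.
Proof. by rewrite /charP diag_mx_diag mk2_00 mk2_11 -chi_1 mx1_mk2. Qed.

Lemma chi_diag2_mul s t s' t' : s != 0 -> t != 0 -> s' != 0 -> t' != 0 ->
  chi (diag2 (s * s') (t * t')) = chi (diag2 s t) * chi (diag2 s' t').
Proof.
move=> s0 t0 s'0 t'0; rewrite -chi_mul; try exact: inT_diag2.
by rewrite mul_mk2 !(mulr0, mul0r, addr0, add0r).
Qed.

Lemma detchar_neq0 g : inGL g -> detchar chi g != 0.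
Proof. by rewrite /inGL unitmxE unitfE => det0; apply/chi_neq0/inT_diag2/oner_neq0. Qed.

Lemma detchar_mul g h : inGL g -> inGL h ->
  detchar chi (g *m h) = detchar chi g * detchar chi h.
Proof.
rewrite /inGL !unitmxE !unitfE => g0 h0.
by rewrite /detchar det_mulmx -chi_diag2_mul ?oner_neq0 // mulr1.
Qed.

Lemma charP_detchar :
  (forall s, s != 0 -> chi (diag2 1 s) = chi (diag2 s 1)) ->
  forall b, inP b -> charP chi b = detchar chi b.
Proof.
move=> chi_sym b bP; have [b00 b11] := inP_diag_neq0 bP.
rewrite /charP diag_mx_diag /detchar det_inP //.
rewrite -[in LHS](mulr1 (b ord0 ord0)) -[in LHS](mul1r (b ord_max ord_max)).
by rewrite !chi_diag2_mul ?oner_neq0 // chi_sym // -chi_diag2_mul ?oner_neq0 // mulr1.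
Qed.

End TorusChar.

Section Eigenvector.
Variables (p : nat) (F : fieldType) (v : F -> int) (C : fieldType) (V : lmodType C).
Variables (chi : 'M[F]_2 -> C) (pi : 'M[F]_2 -> V -> V).
Hypothesis hF : is_nonarch_local_field p v.
Hypothesis chi_neq0 : forall t, inT t -> chi t != 0.
Hypothesis chi_mul : forall t t', inT t -> inT t' -> chi (t *m t') = chi t * chi t'.
Hypothesis pi_lin : forall g, inGL g -> forall (a : C) (x y : V),
  pi g (a *: x + y) = a *: pi g x + pi g y.
Hypothesis pi_mul : forall g h, inGL g -> inGL h -> forall x, pi (g *m h) x = pi g (pi h x).
Variables (y : V) (n : nat).
Hypothesis y_eigen : forall b, inP b -> pi b y = charP chi b *: y.
Hypothesis y_fixed : forall g, inK v n.+1 g -> pi g y = y.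

Lemma unipU_fixed c : pi (unipU c) y = y.
Proof. by rewrite y_eigen ?(charP_unipU chi_neq0 chi_mul) ?scale1r //; exact: inP_unipU. Qed.

Lemma unipL_fixed e : pi (unipL e) y = y.
Proof.
have [s s0 small] := exists_scale_vge hF n.+1 e.
have si0 : s^-1 != 0 by rewrite invr_eq0.
have DsP : inP (diag2 s 1) by exact/inT_inP/inT_diag2/oner_neq0.
have DsiP : inP (diag2 s^-1 1) by exact/inT_inP/inT_diag2/oner_neq0.
have Les_fixed : pi (unipL (e * s)) y = y.
  apply/y_fixed/inK_mk2; rewrite ?subrr //; try by left.
  by rewrite -/(unipL _) unitmxE det_unipL unitr1.
rewrite (unipL_diag2_conj e s0).
rewrite (pi_mul (inP_inGL DsP) (inGL_mul (inGL_unipL _) (inP_inGL DsiP))).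
rewrite (pi_mul (inGL_unipL _) (inP_inGL DsiP)) (y_eigen DsiP).
rewrite (repZ pi_lin _ _ (inGL_unipL _)) Les_fixed (repZ pi_lin _ _ (inP_inGL DsP)).
rewrite (y_eigen DsP) scalerA !charP_diag2 -(chi_diag2_mul chi_mul) ?oner_neq0 //.
by rewrite mulVf // mulr1 /diag2 -mx1_mk2 (chi_1 chi_neq0 chi_mul) scale1r.
Qed.

Lemma unipULU_fixed c e c' : pi (unipU c *m (unipL e *m unipU c')) y = y.
Proof.
rewrite (pi_mul (inGL_unipU _) (inGL_mul (inGL_unipL _) (inGL_unipU _))).
by rewrite (pi_mul (inGL_unipL _) (inGL_unipU _)) unipU_fixed unipL_fixed unipU_fixed.
Qed.

Lemma weyl_fixed : pi weyl y = y.
Proof. by rewrite weyl_unip unipULU_fixed. Qed.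

Lemma weyl'_fixed : pi weyl' y = y.
Proof. by rewrite weyl'_unip unipULU_fixed. Qed.

(* y is an eigenvector of diag2 t s both for chi (diag2 t s) and, by Weyl
   conjugation, for chi (diag2 s t) *)
Lemma chi_diag2_swap : y != 0 ->
  forall s t, s != 0 -> t != 0 -> chi (diag2 t s) = chi (diag2 s t).
Proof.
move=> y0 s t s0 t0.
have DstP : inP (diag2 s t) by exact/inT_inP/inT_diag2.
have DstGL := inP_inGL DstP.
have swap_eigen : pi (diag2 t s) y = chi (diag2 s t) *: y.
  rewrite diag2_weyl_conj (pi_mul (inGL_weyl _) (inGL_mul DstGL (inGL_weyl' _))).
  rewrite (pi_mul DstGL (inGL_weyl' _)) weyl'_fixed (y_eigen DstP).
  by rewrite (repZ pi_lin _ _ (inGL_weyl _)) weyl_fixed charP_diag2.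
have := y_eigen (inT_inP (inT_diag2 t0 s0)).
rewrite swap_eigen charP_diag2 => /eqP.
by rewrite eq_sym -subr_eq0 -scalerBl scaler_eq0 (negbTE y0) orbF subr_eq0 => /eqP.
Qed.

Lemma GL_eigen : (forall s, s != 0 -> chi (diag2 1 s) = chi (diag2 s 1)) ->
  forall g, inGL g -> pi g y = detchar chi g *: y.
Proof.
move=> chi_sym g /GL2_decomp[c [e [b [bP ->]]]].
have bGL := inP_inGL bP.
rewrite (pi_mul (inGL_unipU _) (inGL_mul (inGL_unipL _) bGL)) (pi_mul (inGL_unipL _) bGL).
rewrite (y_eigen bP) (repZ pi_lin _ _ (inGL_unipL _)) unipL_fixed.
rewrite (repZ pi_lin _ _ (inGL_unipU _)) unipU_fixed (charP_detchar chi_mul chi_sym bP).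
by rewrite /detchar !det_mulmx det_unipU det_unipL !mul1r.
Qed.

End Eigenvector.

Lemma detchar_smooth p (F C : fieldType) (v : F -> int) (chi : 'M[F]_2 -> C) :
  is_nonarch_local_field p v -> is_smooth_char_T v chi -> is_smooth_char_G v (detchar chi).
Proof.
move=> hF [chi_neq0 [chi_mul [n chiK]]].
split; [exact: detchar_neq0 | split; [exact: detchar_mul | exists n => g gK]].
have [gGL _] := gK.
have det_neq0 : \det g != 0 by rewrite -unitfE -unitmxE.
apply: chiK; first exact: inT_diag2 (oner_neq0 _).
apply: inK_mk2; rewrite ?subrr; try by left.
- by rewrite unitmx_mk2 mulr1 mulr0 subr0.
- exact (det_inK hF gK).
Qed.

Lemma HomP_iff_HomG (F C : fieldType) (V : lmodType C) (chiP psi : 'M[F]_2 -> C)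
    (pi : 'M[F]_2 -> V -> V) :
  (forall g, inGL g -> forall (a : C) (x y : V), pi g (a *: x + y) = a *: pi g x + pi g y) ->
  (forall b, inP b -> psi b = chiP b) ->
  (forall f, HomP chiP pi f -> forall g, inGL g -> pi g (f 1) = psi g *: f 1) ->
  forall f, HomP chiP pi f <-> HomG psi pi f.
Proof.
move=> pi_lin psi_ext GL_eigen f; split=> [fP | [fl fG]].
- split=> [|g gGL c]; first exact: fP.1.
  rewrite !(Clinear_scale fP.1 (_ * c)) (Clinear_scale fP.1 c).
  by rewrite (repZ pi_lin _ _ gGL) (GL_eigen f fP g gGL) scalerA mulrC.
- by split=> // b bP c; rewrite -psi_ext // fG //; exact: inP_inGL.
Qed.

Theorem lemma5p1 (p : nat) (F : fieldType) (v : F -> int)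
    (C : closedFieldType) (V : lmodType C)
    (hF : is_nonarch_local_field p v) (hC : is_Fpbar C p)
    (chi : 'M[F]_2 -> C) (hchi : is_smooth_char_T v chi)
    (pi : 'M[F]_2 -> V -> V) (hpi : is_smooth_rep v pi) :
  (exists f : C -> V, HomP (charP chi) pi f /\ f <> (fun _ => 0)) ->
  exists psi : 'M[F]_2 -> C,
    [/\ is_smooth_char_G v psi,
        extends_char psi (charP chi),
        (forall psi' : 'M[F]_2 -> C, is_smooth_char_G v psi' ->
           extends_char psi' (charP chi) -> forall g, inGL g -> psi' g = psi g)
      & (forall f : C -> V, HomP (charP chi) pi f <-> HomG psi pi f)].
Proof.
case=> f [fP f_neq0].
have [chi_neq0 [chi_mul [nchi chiK]]] := hchi.
have [[pi_lin [_ pi_mul]] pi_smooth] := hpi.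
have y_neq0 : f 1 != 0.
  apply/eqP => f1; apply: f_neq0; apply: functional_extensionality => c.
  by rewrite (Clinear_scale fP.1) f1 scaler0.
have [n y_fixed] := pi_smooth (f 1).
have chi_sym s : s != 0 -> chi (diag2 1 s) = chi (diag2 s 1).
  by move=> s0; apply: (chi_diag2_swap hF chi_neq0 chi_mul pi_lin pi_mul
    (HomP_eigen fP) y_fixed y_neq0 s0 (oner_neq0 F)).
have extends := charP_detchar chi_mul chi_sym.
have psiG := detchar_smooth hF hchi.
exists (detchar chi); split => //.
- by move=> b /extends.
- move=> psi' [psi'_neq0 [psi'_mul _]] ext' g.
  apply: GLchar_eq_on_P psi'_neq0 psi'_mul psiG.1 psiG.2.1 _ g => b bP.
  by rewrite ext' // extends.
apply: (HomP_iff_HomG pi_lin (fun b bP => esym (extends b bP))) => f' f'P g gGL.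
have [n' y'_fixed] := pi_smooth (f' 1).
exact (GL_eigen hF chi_neq0 chi_mul pi_lin pi_mul (HomP_eigen f'P) y'_fixed chi_sym gGL).
Qed.
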